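(* Let $N_k\Rightarrow_{\mathrm{MO}}^* N_{k+l}$ be a sequence of Monadic transformations that removes exactly all occurrences of atoms $P(t_1,\dots,t_n)$ (for a fixed non-monadic $n$-ary predicate $P$) and replaces them by the atoms $T(f_P(t_1,\dots,t_n))$. If $N^\bot_{k+l}$ is a conflicting core of $N_{k+l}$, then there exists a conflicting core of $N_k$.
   Context: First-order logic without equality. A clause is a finite multiset of literals written $\Gamma \rightarrow \Delta$. A Herbrand interpretation is a set of ground atoms; $I \models \Gamma\rightarrow\Delta$ iff for every grounding substitution $\sigma$, $\Delta\sigma\cap I\neq\emptyset$ or $\Gamma\sigma\not\subseteq I$; a clause set is satisfiable if some Herbrand interpretation satisfies all its clauses. A finite clause set $N^\bot$ is a conflicting core if for every substitution $\tau$ grounding all of $N^\bot$ (one substitution for the whole set, so variables are shared among clauses) the set $N^\bot\tau$ is unsatisfiable. $N^\bot$ is a conflicting core of $N$ if moreover every $C\in N^\bot$ equals $C'\sigma$ for some $C'\in N$ and substitution $\sigma$. Monadic transformation: with a fixed monadic predicate $T$ and function symbol $f_P$, both fresh, replace an occurrence of the atom $P(t_1,\dots,t_n)$, $n>1$, in a clause by $T(f_P(t_1,\dots,t_n))$. *)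

From Stdlib Require Import List Permutation Relations.
Import ListNotations.
Set Implicit Arguments.

Inductive term : Type :=
| Var : nat -> term
| Fn : nat -> list term -> term.

Record atom : Type := mkAtom { pred : nat; args : list term }.

(* A clause  Gamma -> Delta  ; the two lists are read as multisets. *)
Definition clause : Type := (list atom * list atom)%type.

Definition subst : Type := nat -> term.

Fixpoint tsubst (s : subst) (t : term) : term :=
  match t with
  | Var x => s x
  | Fn f ts => Fn f (map (tsubst s) ts)
  end.

Definition asubst (s : subst) (a : atom) : atom :=
  mkAtom (pred a) (map (tsubst s) (args a)).

Definition csubst (s : subst) (C : clause) : clause :=
  (map (asubst s) (fst C), map (asubst s) (snd C)).

Fixpoint tvars (t : term) : list nat :=
  match t with
  | Var x => [x]
  | Fn _ ts => flat_map tvars ts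
  end.

Definition avars (a : atom) : list nat := flat_map tvars (args a).
Definition cvars (C : clause) : list nat :=
  flat_map avars (fst C) ++ flat_map avars (snd C).

Definition ground_term (t : term) : Prop := tvars t = [].
Definition ground_atom (a : atom) : Prop := avars a = [].

Fixpoint tfuns (t : term) : list nat :=
  match t with
  | Var _ => []
  | Fn f ts => f :: flat_map tfuns ts
  end.
Definition afuns (a : atom) : list nat := flat_map tfuns (args a).
Definition cfuns (C : clause) : list nat :=
  flat_map afuns (fst C) ++ flat_map afuns (snd C).
Definition cpreds (C : clause) : list nat :=
  map pred (fst C) ++ map pred (snd C).

Definition grounds_clause (s : subst) (C : clause) : Prop :=
  forall x, In x (cvars C) -> ground_term (s x).

Definition grounds_set (s : subst) (N : list clause) : Prop :=
  forall C, In C N -> grounds_clause s C.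

Definition herbrand (I : atom -> Prop) : Prop :=
  forall a, I a -> ground_atom a.

Definition models (I : atom -> Prop) (C : clause) : Prop :=
  forall s, grounds_clause s C ->
    (exists a, In a (snd C) /\ I (asubst s a)) \/
    ~ (forall a, In a (fst C) -> I (asubst s a)).

Definition satisfiable (N : list clause) : Prop :=
  exists I, herbrand I /\ forall C, In C N -> models I C.

Definition clause_eq (C D : clause) : Prop :=
  Permutation (fst C) (fst D) /\ Permutation (snd C) (snd D).

Definition conflicting_core (Nb : list clause) : Prop :=
  forall tau, grounds_set tau Nb -> ~ satisfiable (map (csubst tau) Nb).

Definition conflicting_core_of (Nb N : list clause) : Prop :=
  conflicting_core Nb /\
  forall C, In C Nb -> exists C' s, In C' N /\ clause_eq C (csubst s C').

Definition atom_list_repl (P n T fP : nat) (l l' : list atom) : Prop :=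
  exists l1 l2 ts,
    l = l1 ++ mkAtom P ts :: l2 /\ length ts = n /\
    l' = l1 ++ mkAtom T [Fn fP ts] :: l2.

Definition clause_repl (P n T fP : nat) (C C' : clause) : Prop :=
  (atom_list_repl P n T fP (fst C) (fst C') /\ snd C' = snd C) \/
  (fst C' = fst C /\ atom_list_repl P n T fP (snd C) (snd C')).

Definition mo_step (P n T fP : nat) (N N' : list clause) : Prop :=
  exists N1 N2 C C',
    N = N1 ++ C :: N2 /\ N' = N1 ++ C' :: N2 /\ clause_repl P n T fP C C'.

Definition mo_steps (P n T fP : nat) : relation (list clause) :=
  clos_refl_trans (list clause) (mo_step P n T fP).

Definition no_pred (P : nat) (N : list clause) : Prop :=
  forall C, In C N -> ~ In P (cpreds C).

(* Undoing the transformation atom by atom, T(f_P(ts)) |-> P(ts), maps every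
   clause of N_{k+l} to a clause of N_k, and commutes with substitution on the
   well-encoded clauses that the transformation produces.  Hence the undone core
   consists of instances of N_k.  It is still a conflicting core: a Herbrand
   model I of one of its ground instances yields the model
   {A in I | pred A <> T} u {T(f_P(ts)) | P(ts) in I} of the corresponding
   instance of the original core. *)
From Stdlib Require Import List Permutation Relations Arith.
Import ListNotations.

Fixpoint term_ind_nested (Pr : term -> Prop) (HV : forall x, Pr (Var x))
  (HF : forall f ts, Forall Pr ts -> Pr (Fn f ts)) (t : term) : Pr t :=
  match t with
  | Var x => HV x
  | Fn f ts => HF f ts ((fix go l := match l return Forall Pr l with
       | [] => Forall_nil _
       | t :: l => Forall_cons _ (term_ind_nested Pr HV HF t) (go l) end) ts)
  end.

Lemma tsubst_tsubst s u t :
  tsubst s (tsubst u t) = tsubst (fun x => tsubst s (u x)) t.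
Proof.
  induction t using term_ind_nested; simpl; auto.
  f_equal. rewrite map_map. apply map_ext_in. intros a Ha.
  rewrite Forall_forall in H. auto.
Qed.

Lemma tsubst_ext u v t :
  (forall x, In x (tvars t) -> u x = v x) -> tsubst u t = tsubst v t.
Proof.
  induction t using term_ind_nested; simpl; intros Huv.
  - apply Huv; auto.
  - f_equal. apply map_ext_in. intros a Ha. rewrite Forall_forall in H.
    apply H; auto. intros x Hx. apply Huv. apply in_flat_map. eauto.
Qed.

Lemma tsubst_Var t : tsubst Var t = t.
Proof.
  induction t using term_ind_nested; simpl; auto.
  f_equal. rewrite Forall_forall in H. rewrite <- (map_id ts) at 2.
  apply map_ext_in. auto.
Qed.

Lemma tsubst_ground s t : ground_term t -> tsubst s t = t.
Proof.
  intros H. rewrite <- (tsubst_Var t) at 2. apply tsubst_ext.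
  unfold ground_term in H. rewrite H. simpl. tauto.
Qed.

Lemma asubst_asubst_ground s tau a :
  (forall x, In x (avars a) -> ground_term (tau x)) ->
  asubst s (asubst tau a) = asubst tau a.
Proof.
  intros H. unfold asubst. simpl. f_equal. rewrite map_map. apply map_ext_in.
  intros t Ht. rewrite tsubst_tsubst. apply tsubst_ext. intros x Hx.
  apply tsubst_ground. apply H. unfold avars. apply in_flat_map. eauto.
Qed.

Lemma grounds_clause_atom tau C a :
  grounds_clause tau C -> In a (fst C) \/ In a (snd C) ->
  forall x, In x (avars a) -> ground_term (tau x).
Proof.
  intros H Ha x Hx. apply H. unfold cvars. apply in_or_app.
  destruct Ha; [left|right]; apply in_flat_map; eauto.
Qed.

Definition true_instance (I : atom -> Prop) (tau : subst) (C : clause) : Prop :=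
  (exists a, In a (snd C) /\ I (asubst tau a)) \/
  ~ (forall a, In a (fst C) -> I (asubst tau a)).

Lemma models_csubst_iff I tau C :
  grounds_clause tau C -> models I (csubst tau C) <-> true_instance I tau C.
Proof.
  intros Hg. unfold models, true_instance, csubst; simpl.
  assert (Hfix : forall s a, In a (fst C) \/ In a (snd C) ->
                   asubst s (asubst tau a) = asubst tau a).
  { intros s a Ha. apply asubst_asubst_ground. eapply grounds_clause_atom; eauto. }
  split.
  - intros H. destruct (H (fun _ => Fn 0 [])) as [[b [Hb Ib]]|Hneg].
    { intros x _. reflexivity. }
    + apply in_map_iff in Hb as [a [<- Ha]]. left. exists a.
      rewrite Hfix in Ib; auto.
    + right. intros Hall. apply Hneg. intros b Hb.
      apply in_map_iff in Hb as [a [<- Ha]]. rewrite Hfix; auto.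
  - intros [[a [Ha Ia]]|Hneg] s _.
    + left. exists (asubst tau a). split; [apply in_map; auto|]. rewrite Hfix; auto.
    + right. intros Hall. apply Hneg. intros a Ha.
      rewrite <- (Hfix s a) by auto. apply Hall, in_map, Ha.
Qed.

Section Undo.

Variables P T fP : nat.

Definition undo_atom (a : atom) : atom :=
  if Nat.eqb (pred a) T then
    match args a with
    | [Fn f ts] => if Nat.eqb f fP then mkAtom P ts else a
    | _ => a
    end
  else a.

Definition undo_clause (C : clause) : clause :=
  (map undo_atom (fst C), map undo_atom (snd C)).

Definition encoded (a : atom) : Prop :=
  pred a <> T \/ exists ts, a = mkAtom T [Fn fP ts].

Definition encoded_clause (C : clause) : Prop :=
  forall a, In a (fst C) \/ In a (snd C) -> encoded a.

Lemma undo_atom_other a : pred a <> T -> undo_atom a = a.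
Proof. intros H. unfold undo_atom. apply Nat.eqb_neq in H. rewrite H. auto. Qed.

Lemma undo_atom_encoding ts : undo_atom (mkAtom T [Fn fP ts]) = mkAtom P ts.
Proof. unfold undo_atom. simpl. rewrite !Nat.eqb_refl. auto. Qed.

(* Only a unary P-atom could be mistaken for an encoding (when P = T). *)
Lemma undo_atom_P ts : length ts <> 1 -> undo_atom (mkAtom P ts) = mkAtom P ts.
Proof.
  intros H. unfold undo_atom. simpl. destruct (P =? T); auto.
  destruct ts as [|t [|t2 ts]]; [reflexivity| |destruct t; reflexivity].
  contradiction H. reflexivity.
Qed.

Lemma encoded_asubst s a : encoded a -> encoded (asubst s a).
Proof.
  intros [H|[ts ->]].
  - left. exact H.
  - right. exists (map (tsubst s) ts). reflexivity.
Qed.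

Lemma undo_atom_asubst s a :
  encoded a -> undo_atom (asubst s a) = asubst s (undo_atom a).
Proof.
  intros [H|[ts ->]].
  - rewrite !undo_atom_other; auto.
  - unfold asubst at 1. simpl. rewrite !undo_atom_encoding. reflexivity.
Qed.

Lemma avars_undo_atom a : encoded a -> avars (undo_atom a) = avars a.
Proof.
  intros [H|[ts ->]].
  - rewrite undo_atom_other; auto.
  - rewrite undo_atom_encoding. unfold avars. simpl. rewrite app_nil_r. reflexivity.
Qed.

Lemma map_undo_atom_asubst s l : (forall a, In a l -> encoded a) ->
  map undo_atom (map (asubst s) l) = map (asubst s) (map undo_atom l).
Proof.
  intros H. rewrite !map_map. apply map_ext_in. intros a Ha.
  apply undo_atom_asubst, H, Ha.
Qed.

Lemma flat_map_avars_undo l : (forall a, In a l -> encoded a) ->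
  flat_map avars (map undo_atom l) = flat_map avars l.
Proof.
  induction l as [|a l IH]; simpl; intros H; auto.
  rewrite avars_undo_atom, IH; auto.
Qed.

Lemma grounds_clause_undo tau C :
  encoded_clause C -> grounds_clause tau (undo_clause C) <-> grounds_clause tau C.
Proof.
  intros H. unfold grounds_clause, cvars, undo_clause; simpl.
  rewrite !flat_map_avars_undo by (intros a Ha; apply H; auto). tauto.
Qed.

Lemma undo_clause_csubst s C :
  encoded_clause C -> undo_clause (csubst s C) = csubst s (undo_clause C).
Proof.
  intros H. unfold undo_clause, csubst; simpl.
  rewrite !map_undo_atom_asubst by (intros a Ha; apply H; auto). reflexivity.
Qed.

Lemma encoded_clause_eq s C D :
  encoded_clause D -> clause_eq C (csubst s D) -> encoded_clause C.
Proof.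
  intros H [E1 E2] a Ha.
  assert (Hin : In a (map (asubst s) (fst D)) \/ In a (map (asubst s) (snd D))).
  { destruct Ha; [left|right]; eapply Permutation_in; eauto. }
  destruct Hin as [Hin|Hin]; apply in_map_iff in Hin as [b [<- Hb]];
    apply encoded_asubst, H; auto.
Qed.

Lemma clause_eq_undo C D :
  clause_eq C D -> clause_eq (undo_clause C) (undo_clause D).
Proof. intros [E1 E2]. split; apply Permutation_map; assumption. Qed.

Lemma undo_clause_T_free C : ~ In T (cpreds C) ->
  undo_clause C = C /\ encoded_clause C.
Proof.
  intros HT.
  assert (Hpred : forall a, In a (fst C) \/ In a (snd C) -> pred a <> T).
  { intros a Ha E. apply HT. unfold cpreds. apply in_or_app.
    destruct Ha; [left|right]; rewrite <- E; apply in_map; auto. }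
  split.
  - destruct C as [g d]. unfold undo_clause; simpl in *.
    rewrite !map_ext_in with (f := undo_atom) (g := fun a => a)
      by (intros a Ha; apply undo_atom_other, Hpred; auto).
    rewrite !map_id. reflexivity.
  - intros a Ha. left. apply Hpred, Ha.
Qed.

Definition undoes_into (Nk N : list clause) : Prop :=
  forall C, In C N -> In (undo_clause C) Nk /\ encoded_clause C.

Lemma atom_list_repl_undo n l l' : 1 < n -> atom_list_repl P n T fP l l' ->
  map undo_atom l' = map undo_atom l /\
  ((forall a, In a l -> encoded a) -> forall a, In a l' -> encoded a).
Proof.
  intros Hn (l1 & l2 & ts & -> & Hlen & ->). split.
  - rewrite !map_app. simpl. rewrite undo_atom_encoding, undo_atom_P.
    + reflexivity.
    + rewrite Hlen. intros ->. apply (Nat.lt_irrefl _ Hn).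
  - intros H a Ha. apply in_app_or in Ha as [Ha|[<-|Ha]].
    + apply H, in_or_app. auto.
    + right. eauto.
    + apply H, in_or_app. simpl. auto.
Qed.

Lemma clause_repl_undo n C C' : 1 < n -> clause_repl P n T fP C C' ->
  undo_clause C' = undo_clause C /\ (encoded_clause C -> encoded_clause C').
Proof.
  intros Hn Hr. destruct C as [g d], C' as [g' d'].
  unfold undo_clause, encoded_clause; simpl.
  destruct Hr as [[Hr E]|[E Hr]]; simpl in *; subst;
    destruct (atom_list_repl_undo _ _ _ Hn Hr) as [Hmap Henc]; rewrite Hmap;
    split; auto; intros H a [Ha|Ha]; auto;
    eapply Henc; eauto; intros b Hb; apply H; auto.
Qed.

Lemma mo_step_undoes_into n Nk N N' : 1 < n ->
  mo_step P n T fP N N' -> undoes_into Nk N -> undoes_into Nk N'.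
Proof.
  intros Hn (N1 & N2 & C & C' & -> & -> & Hr) HI D HD.
  apply in_app_or in HD as [HD|[<-|HD]].
  - apply HI, in_or_app. auto.
  - destruct (HI C) as [HCk HCenc]; [apply in_or_app; simpl; auto|].
    destruct (clause_repl_undo _ _ _ Hn Hr) as [-> Henc]. auto.
  - apply HI, in_or_app. simpl. auto.
Qed.

Lemma mo_steps_undoes_into n Nk N N' : 1 < n ->
  mo_steps P n T fP N N' -> undoes_into Nk N -> undoes_into Nk N'.
Proof.
  intros Hn H. induction H; auto. eapply mo_step_undoes_into; eauto.
Qed.

Definition lift_interp (I : atom -> Prop) (a : atom) : Prop :=
  (pred a <> T /\ I a) \/ (exists ts, a = mkAtom T [Fn fP ts] /\ I (mkAtom P ts)).

Lemma herbrand_lift_interp I : herbrand I -> herbrand (lift_interp I).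
Proof.
  intros Hh a [[_ H]|[ts [-> H]]].
  - apply Hh, H.
  - apply Hh in H. unfold ground_atom, avars in *. simpl in *.
    rewrite app_nil_r. exact H.
Qed.

Lemma lift_interp_asubst I s a : encoded a ->
  lift_interp I (asubst s a) <-> I (asubst s (undo_atom a)).
Proof.
  intros [H|[ts ->]]; unfold lift_interp.
  - rewrite undo_atom_other by auto. split.
    + intros [[_ Ha]|[ts [E _]]]; auto. contradiction H.
      change (pred (asubst s a) = T). rewrite E. reflexivity.
    + intros Ha. left. auto.
  - rewrite undo_atom_encoding. unfold asubst at 1. simpl. split.
    + intros [[H _]|[ts' [E H]]]; [contradiction H; reflexivity|].
      injection E as <-. exact H.
    + intros H. right. eexists. split; [reflexivity|exact H].
Qed.

Lemma true_instance_lift I tau C : encoded_clause C ->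
  true_instance (lift_interp I) tau C <-> true_instance I tau (undo_clause C).
Proof.
  intros Henc. unfold true_instance, undo_clause; simpl.
  assert (Hl : forall a, In a (fst C) \/ In a (snd C) ->
                 lift_interp I (asubst tau a) <-> I (asubst tau (undo_atom a))).
  { intros a Ha. apply lift_interp_asubst, Henc, Ha. }
  split.
  - intros [[a [Ha Ia]]|Hneg].
    + left. exists (undo_atom a). split; [apply in_map; auto|]. apply Hl; auto.
    + right. intros Hall. apply Hneg. intros a Ha. apply Hl; auto.
      apply Hall, in_map, Ha.
  - intros [[b [Hb Ib]]|Hneg].
    + apply in_map_iff in Hb as [a [<- Ha]]. left. exists a. split; auto.
      apply Hl; auto.
    + right. intros Hall. apply Hneg. intros b Hb.
      apply in_map_iff in Hb as [a [<- Ha]]. apply Hl; auto.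
Qed.

Lemma conflicting_core_undo Nb : (forall C, In C Nb -> encoded_clause C) ->
  conflicting_core Nb -> conflicting_core (map undo_clause Nb).
Proof.
  intros Henc Hcore tau Hg [I [Hh Hm]].
  assert (HgC : grounds_set tau Nb).
  { intros C HC. apply grounds_clause_undo; auto. apply Hg, in_map, HC. }
  apply (Hcore tau HgC). exists (lift_interp I).
  split; [apply herbrand_lift_interp, Hh|].
  intros D HD. apply in_map_iff in HD as [C [<- HC]].
  apply models_csubst_iff; [apply HgC, HC|].
  apply true_instance_lift; [apply Henc, HC|].
  apply models_csubst_iff; [apply Hg, in_map, HC|].
  apply Hm, in_map, in_map, HC.
Qed.

Lemma conflicting_core_of_undo Nk N Nb : undoes_into Nk N ->
  conflicting_core_of Nb N -> conflicting_core_of (map undo_clause Nb) Nk.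
Proof.
  intros HI [Hcore Hinst].
  assert (Henc : forall C, In C Nb -> encoded_clause C).
  { intros C HC. destruct (Hinst C HC) as (D & s & HD & Heq).
    eapply encoded_clause_eq; [apply HI, HD|exact Heq]. }
  split; [apply conflicting_core_undo; auto|].
  intros C HC. apply in_map_iff in HC as [C0 [<- HC0]].
  destruct (Hinst C0 HC0) as (D & s & HD & Heq). destruct (HI D HD) as [HDk HDenc].
  exists (undo_clause D), s. split; auto.
  rewrite <- undo_clause_csubst by exact HDenc. apply clause_eq_undo, Heq.
Qed.

End Undo.

Theorem lemma4 (P n T fP : nat) (Nk Nkl Nbkl : list clause) :
  1 < n ->
  (* T and fP are fresh for Nk *)
  (forall C, In C Nk -> ~ In T (cpreds C) /\ ~ In fP (cfuns C)) ->
  (* every P-atom of Nk has arity n *)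
  (forall C a, In C Nk -> (In a (fst C) \/ In a (snd C)) ->
     pred a = P -> length (args a) = n) ->
  mo_steps P n T fP Nk Nkl ->
  no_pred P Nkl ->
  conflicting_core_of Nbkl Nkl ->
  exists Nbk, conflicting_core_of Nbk Nk.
Proof.
  intros Hn Hfresh _ Hsteps _ Hcore.
  exists (map (undo_clause P T fP) Nbkl).
  apply conflicting_core_of_undo with (N := Nkl); auto.
  apply (mo_steps_undoes_into _ _ _ _ _ _ _ Hn Hsteps).
  intros C HC. destruct (undo_clause_T_free P T fP C (proj1 (Hfresh C HC))) as [-> Henc].
  auto.
Qed.
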